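(* Consider $n$ agents and $m$ indivisible items where each agent has a binary submodular valuation (notation as in the context). For any $\chi,\chi'\in\mathcal{SS}$ with profiles $(h_1,\dots,h_n)$ and $(h'_1,\dots,h'_n)$, we have $|h_i-h'_i|\le1$ for every agent $i\in[n]$; i.e. the Chebyshev distance between the profiles is at most $1$.
   Context: Agents $[n]$, items $[m]$. Each agent $i$ has a valuation $v_i:2^{[m]}\to\mathbb{R}_{\ge0}$ with $v_i(\emptyset)=0$ that is binary submodular: the marginal gain $\Delta_i(S;o)=v_i(S\cup\{o\})-v_i(S)$ lies in $\{0,1\}$ for all $S$ and $o$, and $\Delta_i(T;o)\le\Delta_i(S;o)$ whenever $S\subseteq T\subseteq[m]$, $o\notin T$. An allocation $\chi=(\chi_1,\dots,\chi_n)$ is a tuple of pairwise disjoint subsets of $[m]$; bundle $\chi_i$ is clean if $\Delta_i(\chi_i\setminus\{o\};o)=1$ for every $o\in\chi_i$ (equivalently $v_i(\chi_i)=|\chi_i|$); $\chi$ is clean if all bundles are clean; $\chi$ is max-USW if it maximizes $\sum_i v_i(\chi_i)$ among all allocations. The profile is $(h_1,\dots,h_n)$ with $h_i=|\chi_i|$. A criterion is a function $f$ from profiles to $\mathbb{R}$ (lower is better), symmetric if invariant under permuting coordinates; $f$ is strongly Pigou–Dalton if $f(\mathbf{q})<f(\mathbf{p})$ whenever there are $j,k$ with $p_j<p_k$, $q_j,q_k\in(p_j,p_k)$ and $q_i=p_i$ for $i\notin\{j,k\}$. $\mathcal{SS}$ denotes the set of clean max-USW allocations that minimize $f$ of the profile,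 among all clean max-USW allocations, for every symmetric strongly Pigou–Dalton criterion $f$. *)

From HB Require Import structures.
From mathcomp Require Import all_boot all_order.
From mathcomp Require Import fingroup perm.
From mathcomp Require Import all_algebra.
Set Implicit Arguments. Unset Strict Implicit. Unset Printing Implicit Defensive.
Import Order.TTheory GRing.Theory Num.Theory.
Local Open Scope ring_scope.

Definition marg (R : realFieldType) (n m : nat) (v : 'I_n -> {set 'I_m} -> R)
  (i : 'I_n) (S : {set 'I_m}) (o : 'I_m) : R :=
  v i (o |: S) - v i S.

Definition binary_submodular (R : realFieldType) (n m : nat)
  (v : 'I_n -> {set 'I_m} -> R) : Prop :=
  forall i : 'I_n,
    [/\ v i set0 = 0,
        (forall S : {set 'I_m}, 0 <= v i S),
        (forall (S : {set 'I_m}) o, marg v i S o = 0 \/ marg v i S o = 1) &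
        (forall (S T : {set 'I_m}) (o : 'I_m), S \subset T -> o \notin T -> marg v i T o <= marg v i S o)].

Definition allocation (n m : nat) (chi : 'I_n -> {set 'I_m}) : Prop :=
  forall i j : 'I_n, i != j -> [disjoint chi i & chi j].

Definition clean_bundle (R : realFieldType) (n m : nat)
  (v : 'I_n -> {set 'I_m} -> R) (i : 'I_n) (B : {set 'I_m}) : Prop :=
  forall o, o \in B -> marg v i (B :\ o) o = 1.

Definition clean (R : realFieldType) (n m : nat)
  (v : 'I_n -> {set 'I_m} -> R) (chi : 'I_n -> {set 'I_m}) : Prop :=
  forall i, clean_bundle v i (chi i).

Definition usw (R : realFieldType) (n m : nat)
  (v : 'I_n -> {set 'I_m} -> R) (chi : 'I_n -> {set 'I_m}) : R :=
  \sum_(i < n) v i (chi i).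

Definition max_usw (R : realFieldType) (n m : nat)
  (v : 'I_n -> {set 'I_m} -> R) (chi : 'I_n -> {set 'I_m}) : Prop :=
  allocation chi /\
  forall chi' : 'I_n -> {set 'I_m}, allocation chi' -> usw v chi' <= usw v chi.

Definition clean_max_usw (R : realFieldType) (n m : nat)
  (v : 'I_n -> {set 'I_m} -> R) (chi : 'I_n -> {set 'I_m}) : Prop :=
  clean v chi /\ max_usw v chi.

Definition profile (n m : nat) (chi : 'I_n -> {set 'I_m}) : {ffun 'I_n -> nat} :=
  [ffun i => #|chi i|].

(* criteria: functions from profiles to R (lower is better) *)
Definition symmetric_crit (R : realFieldType) (n : nat)
  (f : {ffun 'I_n -> nat} -> R) : Prop :=
  forall (p : {ffun 'I_n -> nat}) (s : {perm 'I_n}),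
    f [ffun i => p (s i)] = f p.

Definition strongly_PD (R : realFieldType) (n : nat)
  (f : {ffun 'I_n -> nat} -> R) : Prop :=
  forall (p q : {ffun 'I_n -> nat}) (j k : 'I_n),
    (p j < p k)%N ->
    (p j < q j < p k)%N ->
    (p j < q k < p k)%N ->
    (forall i, i != j -> i != k -> q i = p i) ->
    f q < f p.

Definition in_SS (R : realFieldType) (n m : nat)
  (v : 'I_n -> {set 'I_m} -> R) (chi : 'I_n -> {set 'I_m}) : Prop :=
  clean_max_usw v chi /\
  forall f : {ffun 'I_n -> nat} -> R,
    symmetric_crit f -> strongly_PD f ->
    forall chi', clean_max_usw v chi' -> f (profile chi) <= f (profile chi').

(* A binary submodular valuation is a matroid rank function whose independent
   sets are the clean bundles.  Augmenting along alternating paths shows that the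
   profiles of clean max-USW allocations satisfy the exchange axiom of an M-convex
   set, and weak exchange implies simultaneous exchange.  So if [h_i >= h'_i + 2]
   for profiles [h], [h'] in SS, there is [j] with [h_j < h'_j] such that
   [h - e_i + e_j] and [h' + e_i - e_j] are again optimal profiles.  Minimality for
   the single symmetric strongly Pigou-Dalton criterion [sum_a 2 ^ h_a] forces
   [h_i <= h_j + 1] and [h'_j <= h'_i + 1], contradicting [h_j < h'_j]. *)

From mathcomp Require Import all_boot all_order.
From mathcomp Require Import fingroup perm.
From mathcomp Require Import all_algebra.
From mathcomp Require Import zify lra.
Set Implicit Arguments. Unset Strict Implicit. Unset Printing Implicit Defensive.
Import Order.TTheory GRing.Theory Num.Theory.
Local Open Scope ring_scope.

Lemma finset_ind (T : finType) (P : {set T} -> Prop) :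
  P set0 -> (forall (S : {set T}) x, x \notin S -> P S -> P (x |: S)) -> forall S, P S.
Proof.
move=> P0 PU1 S; have [k] := ubnP #|S|; elim: k S => // k IH S ltSk.
have [->|/set0Pn [x xS]] := eqVneq S set0; first by [].
rewrite -(setD1K xS); apply: PU1; first by rewrite setD11.
by apply: IH; move: ltSk; rewrite (cardsD1 x S) xS.
Qed.

Definition binary_rank (R : realFieldType) (T : finType) (w : {set T} -> R) : Prop :=
  [/\ w set0 = 0,
      forall (S : {set T}) x, w (x |: S) - w S = 0 \/ w (x |: S) - w S = 1 &
      forall (S U : {set T}) x,
        S \subset U -> x \notin U -> w (x |: U) - w U <= w (x |: S) - w S].

Section BinaryRank.

Variables (R : realFieldType) (T : finType) (w : {set T} -> R).
Implicit Types (S U B I J D : {set T}) (x : T).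
Hypothesis w_rank : binary_rank w.

Lemma rank_submod S U x :
  S \subset U -> x \notin U -> w (x |: U) - w U <= w (x |: S) - w S.
Proof. by case: w_rank => _ _; apply. Qed.

Lemma rank_setU1_ge S x : w S <= w (x |: S).
Proof. by case: w_rank => _ /(_ S x) [] ? _; lra. Qed.

Lemma rank_setU1_le S x : w (x |: S) <= w S + 1.
Proof. by case: w_rank => _ /(_ S x) [] ? _; lra. Qed.

Lemma rank_le_card S : w S <= #|S|%:R.
Proof.
elim/finset_ind: S => [|S x xS IH]; first by case: w_rank => ->; rewrite cards0.
by rewrite cardsU1 xS natrD addrC; apply: le_trans (rank_setU1_le S x) _; rewrite lerD2r.
Qed.

Lemma rank_mono S U : S \subset U -> w S <= w U.
Proof.
move=> /setUidPr <-; elim/finset_ind: U => [|U x _ IH]; first by rewrite setU0.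
by rewrite setUCA; apply: le_trans IH (rank_setU1_ge _ _).
Qed.

Lemma rank_full_subset B :
  (forall x, x \in B -> w (x |: (B :\ x)) - w (B :\ x) = 1) ->
  forall S, S \subset B -> w S = #|S|%:R.
Proof.
move=> Bfull; elim/finset_ind => [|S x xS IH] sSB; first by case: w_rank => ->; rewrite cards0.
have xB : x \in B by apply: (subsetP sSB); rewrite setU11.
have sSBx : S \subset B :\ x.
  apply/subsetP => y yS; rewrite in_setD1 (subsetP sSB) ?andbT; last by rewrite inE yS orbT.
  by apply: contraNneq xS => <-.
have := rank_submod sSBx (negbT (setD11 x B)).
have := Bfull x xB; have := rank_setU1_le S x.
rewrite cardsU1 xS /= natrD -IH; last by apply: subset_trans sSB; apply: subsetUr.
lra.
Qed.

Lemma rank_full_marg B : w B = #|B|%:R ->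
  forall x, x \in B -> w (x |: (B :\ x)) - w (B :\ x) = 1.
Proof.
move=> wB x xB; have := rank_le_card (B :\ x).
case: w_rank => _ /(_ (B :\ x) x) + _; rewrite (setD1K xB) wB (cardsD1 x B) xB /= natrD.
by case=> ?; lra.
Qed.

Lemma rank_augment I J : w I = #|I|%:R -> w J = #|J|%:R -> (#|I| < #|J|)%N ->
  exists x, [/\ x \in J, x \notin I & w (x |: I) = #|x |: I|%:R].
Proof.
move=> wI wJ ltIJ.
case: (pickP [pred x | [&& x \in J, x \notin I & w (x |: I) == w I + 1]]) =>
    [x /and3P [xJ xI /eqP wxI] | noaug].
  by exists x; split => //; rewrite cardsU1 xI natrD wxI wI addrC.
suff wIJ : forall D, D \subset J -> w (I :|: D) = w I.
  have := rank_mono (subsetUr I J); rewrite wIJ // wI wJ ler_nat; lia.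
elim/finset_ind => [|D x _ IH] sDJ; first by rewrite setU0.
have xJ : x \in J by apply: (subsetP sDJ); rewrite setU11.
rewrite setUCA -IH; last by apply: subset_trans sDJ; apply: subsetUr.
have [xID|xID] := boolP (x \in I :|: D); first by rewrite (setUidPr _) // sub1set.
have xI : x \notin I by apply: contra xID; rewrite inE => ->.
have wxI : w (x |: I) = w I.
  have := noaug x; rewrite /= xJ xI /=.
  by case: w_rank => _ /(_ I x) [] ? _ /eqP //; lra.
have := rank_submod (subsetUl I D) xID.
have := rank_setU1_ge (I :|: D) x; lra.
Qed.

End BinaryRank.

Lemma sum_nat_pred1 (n : nat) (i : 'I_n) : (\sum_(b < n) (b == i) = 1)%N.
Proof. by rewrite -big_mkcond big_pred1_eq. Qed.

Lemma ltn_sum_ord (n : nat) (F G : 'I_n -> nat) (i : 'I_n) :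
  (forall b, F b <= G b)%N -> (F i < G i)%N -> (\sum_(b < n) F b < \sum_(b < n) G b)%N.
Proof.
move=> leFG ltFGi; rewrite (bigD1 i) //= [X in (_ < X)%N](bigD1 i) //= -addSn.
by apply: leq_add => //; apply: leq_sum.
Qed.

(* [y] is [x] with one unit moved from [j] to [a], stated additively to avoid
   truncated subtraction. *)
Definition transfer (n : nat) (x : 'I_n -> nat) (j a : 'I_n) (y : 'I_n -> nat) : Prop :=
  forall b, (y b + (b == j) = x b + (b == a))%N.

Lemma transfer_sum (n : nat) (x y : 'I_n -> nat) j a :
  transfer x j a y -> (\sum_(b < n) y b = \sum_(b < n) x b)%N.
Proof.
move=> txy.
have : (\sum_(b < n) (y b + (b == j)) = \sum_(b < n) (x b + (b == a)))%N.
  by apply: eq_bigr => b _; apply: txy.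
by rewrite !big_split /= !sum_nat_pred1 => /addIn.
Qed.

Lemma transfer_trans (n : nat) (x y z : 'I_n -> nat) j c a :
  transfer x c a y -> transfer y j c z -> transfer x j a z.
Proof. by move=> txy tyz b; move: (txy b) (tyz b); lia. Qed.

Section StrongExchange.

Variables (n : nat) (P : {ffun 'I_n -> nat} -> Prop).
Implicit Types (x y : {ffun 'I_n -> nat}).
Hypothesis P_exchange : forall x y a, P x -> P y -> (x a < y a)%N ->
  exists2 j, (y j < x j)%N & exists2 x', P x' & transfer x j a x'.

(* Induction on the excess of [x] over [y]: exchanging at [i] from [y] and then
   at the resulting [j] from [x] gives [x1 = x - e_l + e_j].  Unless [l = i],
   [x1] is closer to [y], and one more exchange on the witness obtained for [x1]
   cancels one of its two extra units. *)
Lemma strong_exchange x y i : P x -> P y -> (y i < x i)%N ->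
  exists2 j, (x j < y j)%N &
    (exists2 x', P x' & transfer x i j x') /\ (exists2 y', P y' & transfer y j i y').
Proof.
move=> + Py; have [k] := ubnP (\sum_(a < n) (x a - y a))%N.
elim: k x => // k IH x ltk Px ltyxi.
have [j ltxyj [y1 Py1 ty1]] := P_exchange Py Px ltyxi.
have [l ltyxl [x1 Px1 tx1]] := P_exchange Px Py ltxyj.
have [eli|li] := eqVneq l i; first by subst l; exists j => //; split; [exists x1 | exists y1].
have lj : l != j by apply: contraTneq ltxyj => <-; rewrite -leqNgt ltnW.
have ji : j != i by apply: contraTneq ltxyj => ->; rewrite -leqNgt ltnW.
have ltyx1i : (y i < x1 i)%N.
  by move: (tx1 i); rewrite eq_sym (negbTE li) eq_sym (negbTE ji); lia.
have ltk1 : (\sum_(a < n) (x1 a - y a) < k)%N.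
  rewrite -ltnS; apply: leq_trans ltk; rewrite ltnS.
  apply: (ltn_sum_ord (i := l)) => [a|]; last first.
    by move: (tx1 l); rewrite eqxx (negbTE lj); lia.
  move: (tx1 a); have [<-|_] := eqVneq j a; last by case: (a == l); lia.
  by rewrite [j == l]eq_sym (negbTE lj); lia.
have [j2 ltxy1j2 [[u Pu tu] [y2 Py2 ty2]]] := IH x1 ltk1 Px1 ltyx1i.
have j2l : j2 != l.
  by apply: contraTneq ltxy1j2 => ->; move: (tx1 l); rewrite eqxx (negbTE lj); lia.
have ltuxl : (u l < x l)%N.
  move: (tu l) (tx1 l); rewrite eqxx (negbTE li) [l == j2]eq_sym (negbTE j2l) (negbTE lj).
  lia.
have [l2 ltxul2 [u' Pu' tu']] := P_exchange Pu Px ltuxl.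
have ltxyj2 : (x j2 < y j2)%N by move: (tx1 j2); rewrite (negbTE j2l); lia.
have : (l2 == j) || (l2 == j2).
  apply/negPn/negP; rewrite negb_or => /andP [l2j l2j2].
  by move: ltxul2 (tu l2) (tx1 l2); rewrite (negbTE l2j) (negbTE l2j2); lia.
case/orP => /eqP el2; subst l2.
- exists j2 => //; split; last by exists y2.
  by exists u' => // b; move: (tu' b) (tu b) (tx1 b); lia.
- exists j => //; split; last by exists y1.
  by exists u' => // b; move: (tu' b) (tu b) (tx1 b); lia.
Qed.

End StrongExchange.

Lemma disjoint_setU1_setD1 (T : finType) (A B : {set T}) x :
  [disjoint A & B] -> [disjoint x |: A & B :\ x].
Proof.
move=> dAB; rewrite -setI_eq0; apply/eqP/setP => y; rewrite !inE.
by case: eqP => //= _; case yA: (y \in A); rewrite // (disjointFr dAB yA) andbF.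
Qed.

Section CleanAllocations.

Variables (R : realFieldType) (n m : nat) (v : 'I_n -> {set 'I_m} -> R).
Implicit Types (X Y Z : 'I_n -> {set 'I_m}) (B S : {set 'I_m}).
Hypothesis v_bin : binary_submodular v.

Lemma binary_submodular_rank i : binary_rank (v i).
Proof. by case: (v_bin i). Qed.

Lemma clean_bundleP i B : clean_bundle v i B <-> v i B = #|B|%:R.
Proof.
split=> [cB|vB o]; last exact: (rank_full_marg (binary_submodular_rank i) vB (x := o)).
exact: (rank_full_subset (binary_submodular_rank i) cB (subxx B)).
Qed.

Lemma clean_bundle_subset i B S : clean_bundle v i B -> S \subset B -> clean_bundle v i S.
Proof.
by move=> cB sSB; apply/clean_bundleP/(rank_full_subset (binary_submodular_rank i) cB).
Qed.

Lemma usw_clean X : clean v X -> usw v X = (\sum_(a < n) profile X a)%:R.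
Proof.
by move=> cX; rewrite natr_sum; apply: eq_bigr => a _; rewrite ffunE; apply/clean_bundleP.
Qed.

Lemma clean_max_usw_size_max Y Z : clean_max_usw v Y -> clean v Z -> allocation Z ->
  (\sum_(a < n) profile Z a <= \sum_(a < n) profile Y a)%N.
Proof. by move=> [cY [_ maxY]] cZ aZ; rewrite -(ler_nat R) -!usw_clean // maxY. Qed.

Lemma clean_max_usw_same_size Y Z : clean_max_usw v Y -> clean v Z -> allocation Z ->
  (\sum_(a < n) profile Z a = \sum_(a < n) profile Y a)%N -> clean_max_usw v Z.
Proof.
move=> [cY [aY maxY]] cZ aZ eqYZ; split=> //; split=> // W aW.
by rewrite [usw v Z]usw_clean // eqYZ -usw_clean // maxY.
Qed.

Definition reassign Y (o : 'I_m) (i : 'I_n) : 'I_n -> {set 'I_m} :=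
  fun b => if b == i then o |: Y b else Y b :\ o.

Lemma reassign_self Y o i : reassign Y o i i = o |: Y i.
Proof. by rewrite /reassign eqxx. Qed.

Lemma allocation_reassign Y o i : allocation Y -> allocation (reassign Y o i).
Proof.
move=> aY a b ab; rewrite /reassign.
have [ai|ai] := eqVneq a i; have [bi|bi] := eqVneq b i.
- by move: ab; rewrite ai bi eqxx.
- exact/disjoint_setU1_setD1/aY.
- by rewrite disjoint_sym; apply/disjoint_setU1_setD1/aY; rewrite eq_sym.
- by apply: disjointW (aY a b ab); apply: subsetDl.
Qed.

Lemma allocation_memE Y o c b :
  allocation Y -> o \in Y c -> (o \in Y b) = (b == c).
Proof.
move=> aY oc; have [->|bc] := eqVneq b c => //.
by apply: disjointFr (aY c b _) oc; rewrite eq_sym.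
Qed.

Lemma profile_reassign Y o i b :
  o \notin Y i -> (profile (reassign Y o i) b + (o \in Y b) = profile Y b + (b == i))%N.
Proof.
rewrite !ffunE /reassign => oY; have [->|_] := eqVneq b i.
  by rewrite cardsU1 oY (negbTE oY) addn0 addnC.
by rewrite [#|Y b|](cardsD1 o) addnC addn0.
Qed.

Lemma reassign_transfer Y o c i :
  allocation Y -> o \in Y c -> o \notin Y i ->
  transfer (profile Y) c i (profile (reassign Y o i)).
Proof. by move=> aY oc oY b; rewrite -(allocation_memE b aY oc) profile_reassign. Qed.

Definition misplaced X Y : nat := \sum_(a < n) #|X a :\: Y a|.

Lemma misplaced_reassign X Y o i :
  allocation X -> o \in X i -> o \notin Y i ->
  (misplaced X (reassign Y o i) < misplaced X Y)%N.
Proof.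
move=> aX oX oY; apply: (ltn_sum_ord (i := i)) => [a|]; last first.
  by rewrite reassign_self setUC -setDDl [X in (_ < X)%N](cardsD1 o) inE oX oY.
rewrite /reassign; have [->|ai] := eqVneq a i; first exact/subset_leq_card/setDS/subsetUr.
apply/subset_leq_card/subsetP => x; rewrite !inE => /andP [xY xXa]; rewrite xXa andbT.
apply: contra xY => xYa; rewrite xYa andbT; apply: contraTneq oX => <-.
by rewrite (disjointFr (aX a i ai) xXa).
Qed.

Lemma clean_reassign Y o i : clean v Y -> v i (o |: Y i) = #|o |: Y i|%:R ->
  clean v (reassign Y o i).
Proof.
move=> cY vi b; rewrite /reassign; case: eqVneq => [->|_]; first exact/clean_bundleP.
exact: clean_bundle_subset (cY b) (subsetDl _ _).
Qed.

Lemma clean_max_usw_owned Y o i : clean_max_usw v Y -> o \notin Y i ->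
  v i (o |: Y i) = #|o |: Y i|%:R -> exists c, o \in Y c.
Proof.
move=> cmuY oY vi; apply/existsP; apply: contraT => /existsPn unowned.
have [cY [aY _]] := cmuY.
have := clean_max_usw_size_max cmuY (clean_reassign cY vi) (allocation_reassign o i aY).
suff -> : (\sum_(b < n) profile (reassign Y o i) b = \sum_(b < n) profile Y b + 1)%N.
  by rewrite addn1 ltnn.
rewrite -(sum_nat_pred1 i) -big_split; apply: eq_bigr => b _.
by rewrite /= -(profile_reassign b oY) (negbTE (unowned b)) addn0.
Qed.

(* Alternating path: give [o] to [i]; by maximality [o] had an owner [c], who
   either is the required [j] or continues the path.  [misplaced X] decreases
   since [o] now sits where [X] puts it. *)
Lemma clean_max_usw_exchange X Y i : clean v X -> allocation X -> clean_max_usw v Y ->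
  (profile Y i < profile X i)%N ->
  exists2 j, (profile X j < profile Y j)%N &
    exists2 Y', clean_max_usw v Y' & transfer (profile Y) j i (profile Y').
Proof.
move=> cX aX; have [k] := ubnP (misplaced X Y); elim: k Y i => // k IH Y i ltk cmuY ltYXi.
have [cY [aY _]] := cmuY.
have ltYXi_card := ltYXi; rewrite !ffunE in ltYXi_card.
have [o [oX oY vo]] := rank_augment (binary_submodular_rank i)
  ((clean_bundleP _ _).1 (cY i)) ((clean_bundleP _ _).1 (cX i)) ltYXi_card.
have [c oc] := clean_max_usw_owned cmuY oY vo.
have tY1 := reassign_transfer aY oc oY.
have cmuY1 : clean_max_usw v (reassign Y o i).
  apply: clean_max_usw_same_size cmuY (clean_reassign cY vo) (allocation_reassign o i aY) _.
  exact: transfer_sum tY1.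
have [ltXYc|leYXc] := ltnP (profile X c) (profile Y c).
  by exists c => //; exists (reassign Y o i).
have ci : c != i by apply: contraNneq oY => <-.
have ltY1Xc : (profile (reassign Y o i) c < profile X c)%N.
  by move: (tY1 c); rewrite eqxx (negbTE ci); lia.
have [j ltXY1j [Y' cmuY' tY']] :=
  IH _ c (leq_trans (misplaced_reassign aX oX oY) ltk) cmuY1 ltY1Xc.
have jc : j != c by apply: contraTneq ltXY1j => ->; rewrite -leqNgt ltnW.
have ji : j != i.
  by apply: contraTneq ltXY1j => ->; move: (tY1 i); rewrite eqxx eq_sym (negbTE ci); lia.
exists j; last by exists Y' => //; apply: transfer_trans tY1 tY'.
by move: (tY1 j); rewrite (negbTE jc) (negbTE ji); lia.
Qed.

End CleanAllocations.

Definition exp2_crit (R : realFieldType) (n : nat) (p : {ffun 'I_n -> nat}) : R :=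
  (\sum_(a < n) 2 ^ p a)%N%:R.

Lemma exp2_crit_sym (R : realFieldType) (n : nat) : symmetric_crit (@exp2_crit R n).
Proof.
move=> p s; rewrite /exp2_crit; congr (_%:R).
by rewrite [RHS](reindex_inj (@perm_inj _ s)); apply: eq_bigr => a _; rewrite ffunE.
Qed.

Lemma exp2_crit_PD (R : realFieldType) (n : nat) : strongly_PD (@exp2_crit R n).
Proof.
move=> p q j k ltpjk /andP [ltpqj ltqpj] /andP [ltpqk ltqpk] qpE; rewrite /exp2_crit ltr_nat.
have jk : j != k by apply: contraTneq ltpjk => ->; rewrite ltnn.
have split_kj (g : 'I_n -> nat) :
    (\sum_(b < n) g b = g k + g j + \sum_(b < n | (b != k) && (b != j)) g b)%N.
  by rewrite (bigD1 k) //= (bigD1 j) //= addnA.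
rewrite (split_kj (fun b => 2 ^ q b)%N) (split_kj (fun b => 2 ^ p b)%N) /=.
rewrite [X in (_ < _ + X)%N](eq_bigr (fun b => 2 ^ q b)%N) ?ltn_add2r; last first.
  by move=> b /andP [bk bj]; rewrite qpE.
(* [2 ^ q j + 2 ^ q k <= 2 * 2 ^ (p k).-1 = 2 ^ p k < 2 ^ p k + 2 ^ p j] *)
case pkE: (p k) ltpjk ltqpj ltqpk => [//|e] _ ltqj ltqk.
have : (2 ^ q k <= 2 ^ e)%N by rewrite leq_pexp2l.
have : (2 ^ q j <= 2 ^ e)%N by rewrite leq_pexp2l.
have : (0 < 2 ^ p j)%N by rewrite expn_gt0.
rewrite expnS; move: (2 ^ q k)%N (2 ^ q j)%N (2 ^ p j)%N (2 ^ e)%N; lia.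
Qed.

Section OptimalProfiles.

Variables (R : realFieldType) (n m : nat) (v : 'I_n -> {set 'I_m} -> R).
Implicit Types (chi : 'I_n -> {set 'I_m}) (p q x y : {ffun 'I_n -> nat}).
Hypothesis v_bin : binary_submodular v.

Definition optimal_profile p : Prop :=
  exists2 X, clean_max_usw v X & profile X = p.

Lemma optimal_profile_exchange x y a :
  optimal_profile x -> optimal_profile y -> (x a < y a)%N ->
  exists2 j, (y j < x j)%N & exists2 x', optimal_profile x' & transfer x j a x'.
Proof.
move=> [Y cmuY <-] [X [cX [aX _]] <-] ltYXa.
have [j ltXYj [Y' cmuY' tY']] := clean_max_usw_exchange v_bin cX aX cmuY ltYXa.
by exists j => //; exists (profile Y') => //; exists Y'.
Qed.

Lemma in_SS_balanced chi q a b :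
  in_SS v chi -> optimal_profile q -> transfer (profile chi) a b q ->
  (profile chi a <= (profile chi b).+1)%N.
Proof.
move=> [_ minchi] [chi' cmu' <-] tq; rewrite leqNgt; apply/negP => ltba.
have ab : a != b by apply: contraTneq ltba => ->; rewrite -leqNgt.
have := minchi _ (@exp2_crit_sym R n) (@exp2_crit_PD R n) chi' cmu'; apply/negP; rewrite -ltNge.
apply: (@exp2_crit_PD R n _ _ b a) => [|||c cb ca]; first lia.
- by move: (tq b); rewrite eqxx [b == a]eq_sym (negbTE ab); lia.
- by move: (tq a); rewrite eqxx (negbTE ab); lia.
- by move: (tq c); rewrite (negbTE ca) (negbTE cb); lia.
Qed.

Lemma in_SS_profile_le chi chi' i :
  in_SS v chi -> in_SS v chi' -> (profile chi i <= profile chi' i + 1)%N.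
Proof.
move=> SSchi SSchi'; rewrite leqNgt addn1; apply/negP => ltchi.
have opt_chi : optimal_profile (profile chi) by exists chi => //; case: SSchi.
have opt_chi' : optimal_profile (profile chi') by exists chi' => //; case: SSchi'.
have [j ltj [[x' opt_x' tx'] [y' opt_y' ty']]] :=
  strong_exchange (fun _ _ _ => @optimal_profile_exchange _ _ _) opt_chi opt_chi' (ltnW ltchi).
have := in_SS_balanced SSchi opt_x' tx'.
have := in_SS_balanced SSchi' opt_y' ty'.
lia.
Qed.

End OptimalProfiles.

Theorem theorem5 (R : realFieldType) (n m : nat) (v : 'I_n -> {set 'I_m} -> R)
  (chi chi' : 'I_n -> {set 'I_m}) :
  binary_submodular v ->
  in_SS v chi -> in_SS v chi' ->
  forall i : 'I_n,
    (profile chi i <= profile chi' i + 1)%N /\ (profile chi' i <= profile chi i + 1)%N.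
Proof. by move=> v_bin SSchi SSchi' i; split; apply: in_SS_profile_le. Qed.
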